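(* Let $n\ge 3$ be an integer and let $P_1,\dots,P_n\in\mathbb{R}^2$ be the vertices, labelled counter-clockwise, of a convex regular polygon with $n$ edges, positioned so that $P_1$ lies on the line $\{y=0\}$ and every other vertex satisfies $\overrightarrow{OP_i}\cdot\vec e_2>0$, where $O$ is the origin and $\vec e_2=(0,1)^T$. Indices are taken modulo $n$ (so $P_{n+1}=P_1$). Let $k>0$ and $\kappa>0$ be constants and set $$C:=\frac{|\overrightarrow{P_iP_{i+1}}\times\overrightarrow{P_{i-1}P_i}|}{|\overrightarrow{P_iP_{i+1}}|^2\,|\overrightarrow{P_{i-1}P_i}|^2},$$ which is independent of $i$. For $\bm V=(\vec v_2,\dots,\vec v_n)\in\mathbb{R}^{2n-2}$ (each $\vec v_i\in\mathbb{R}^2$) put $\vec v_1=\vec v_{n+1}=(0,0)^T$ and define $$J_s(\bm V)=\frac{k}{2}\sum_{i=1}^{n}|\vec v_{i+1}-\vec v_i|^2,$$ $$J_b(\bm V)=\frac{\kappa C^2}{2}\sum_{i=2}^{n}\Big|\overrightarrow{P_{i-1}P_i}\cdot\vec v_{i+1}+\big(\overrightarrow{P_iP_{i+1}}-\overrightarrow{P_{i-1}P_i}\big)\cdot\vec v_i-\overrightarrow{P_iP_{i+1}}\cdot\vec v_{i-1}\Big|^2,$$ and $J=J_s+J_b$. Let $$\mathcal U:=\Big\{\bm V=(\vec v_i)_{i=2}^n\in\mathbb{R}^{2n-2}:\ (\overrightarrow{OP_i}+\vec v_i)\cdot\vec e_2\ge 0\ \text{ for all } 2\le i\le n\Big\}.$$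 Then for every $\bm F\in\mathbb{R}^{2n-2}$ the minimization problem $$\inf_{\bm V\in\mathcal U}\big(J(\bm V)-\bm F^T\bm V\big)$$ admits a unique minimizer $\bm U\in\mathcal U$. Equivalently, writing $J(\bm V)=\tfrac12\bm V^T\mathcal A\bm V$ with $\mathcal A$ the symmetric $(2n-2)\times(2n-2)$ matrix of the quadratic form $J$, there exists a unique $\bm U\in\mathcal U$ such that $$(\mathcal A\bm U)\cdot(\bm V-\bm U)\ge \bm F\cdot(\bm V-\bm U)\quad\text{for all }\bm V\in\mathcal U.$$
   Context: This is a discrete model for the linearized deformation of a regular polygon (vertex $P_1$ clamped, i.e. undergoing zero displacement) that is not allowed to cross the rigid flat line $\{y=0\}$ on which it initially touches only at $P_1$. $\bm V$ collects the displacements $\vec v_i$ of the vertices $P_i$, $2\le i\le n$; $J_s$ is the stretching energy of the edges and $J_b$ is the linearized bending energy associated with changes of the angles between consecutive edges. $\bm F=(\vec f_i)_{i=2}^n$ is the array of applied forces on the vertices $P_2,\dots,P_n$. For vectors $a,b\in\mathbb{R}^2$, $a\cdot b$ is the Euclidean inner product and $|a\times b|$ is the absolute value of the scalar cross product $a_1b_2-a_2b_1$. *)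

From mathcomp Require Import all_boot all_order all_algebra.
From mathcomp Require Import reals trigo.
Set Implicit Arguments. Unset Strict Implicit. Unset Printing Implicit Defensive.
Import Order.TTheory GRing.Theory Num.Theory.
Local Open Scope ring_scope.

Section Defs.
Variable R : realType.

Definition vadd (a b : R * R) : R * R := (a.1 + b.1, a.2 + b.2).
Definition vsub (a b : R * R) : R * R := (a.1 - b.1, a.2 - b.2).
Definition dot (a b : R * R) : R := a.1 * b.1 + a.2 * b.2.
Definition cross (a b : R * R) : R := a.1 * b.2 - a.2 * b.1.
Definition nrm2 (a : R * R) : R := dot a a.

(* Vertex P_i (1-based, i >= 1) of the regular convex n-gon with center c,
   circumradius r and angular offset th, labelled counter-clockwise:
   P_i = c + r (cos(th + 2 pi (i-1)/n), sin(th + 2 pi (i-1)/n)).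
   The formula is n-periodic in i, so P_{n+1} = P_1. *)
Definition vtx (n : nat) (c : R * R) (r th : R) (i : nat) : R * R :=
  let a := th + 2 * pi * (i.-1)%:R / n%:R in
  (c.1 + r * cos a, c.2 + r * sin a).

Definition edge n c r th (i : nat) : R * R :=
  vsub (vtx n c r th i) (vtx n c r th i.-1).

(* C, computed at i = 2 (independent of i by regularity) *)
Definition Cconst n c r th : R :=
  `|cross (edge n c r th 3) (edge n c r th 2)|
    / (nrm2 (edge n c r th 3) * nrm2 (edge n c r th 2)).

(* displacements: V indexes v_2, ..., v_n by j : 'I_(n-1), v_(j+2) = V j *)
Definition disp (n : nat) := {ffun 'I_n.-1 -> R * R}.

(* v_i for 1 <= i <= n+1, with v_1 = v_{n+1} = 0 *)
Definition vfull (n : nat) (V : disp n) (i : nat) : R * R :=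
  match insub (i - 2)%N with
  | Some j => if (2 <= i)%N then V j else (0, 0)
  | None => (0, 0)
  end.

Definition Js (n : nat) (k : R) (V : disp n) : R :=
  k / 2 * \sum_(1 <= i < n.+1) nrm2 (vsub (vfull V i.+1) (vfull V i)).

Definition Jb (n : nat) c r th (kappa : R) (V : disp n) : R :=
  kappa * (Cconst n c r th) ^+ 2 / 2 *
  \sum_(2 <= i < n.+1)
    (dot (edge n c r th i) (vfull V i.+1)
     + dot (vsub (edge n c r th i.+1) (edge n c r th i)) (vfull V i)
     - dot (edge n c r th i.+1) (vfull V i.-1)) ^+ 2.

Definition Jtot n c r th k kappa (V : disp n) : R :=
  Js k V + Jb c r th kappa V.

Definition pairing (n : nat) (F V : disp n) : R :=
  \sum_(j : 'I_n.-1) dot (F j) (V j).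

Definition admissible n c r th (V : disp n) : Prop :=
  forall i : nat, (2 <= i <= n)%N -> 0 <= (vadd (vtx n c r th i) (vfull V i)).2.

End Defs.

From mathcomp Require Import all_boot all_order all_algebra.
From mathcomp Require Import reals trigo.
From mathcomp Require Import all_classical all_analysis.
From mathcomp Require Import ring lra zify.
Set Implicit Arguments.
Unset Strict Implicit.
Unset Printing Implicit Defensive.

Import Order.TTheory GRing.Theory Num.Theory.
Import numFieldNormedType.Exports.
Local Open Scope classical_set_scope.
Local Open Scope ring_scope.

(* The energy J = J_s + J_b is a nonnegative quadratic form whose stretching part alone
   controls every displacement: since v_1 = 0, telescoping along the chain gives
   |v_i| <= n sqrt (sum_i |v_(i+1) - v_i|^2).  Hence J - F^T V is coercive, and its admissible
   sublevel set {J - F^T V <= 0}, which contains V = 0, lies in a compact box on which the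
   continuous objective attains its minimum.  Uniqueness follows from the parallelogram
   identity for J, the convexity of the admissible set, and J_s vanishing only at V = 0.
   The polygon enters only through J_b >= 0, and of the hypotheses on the vertices only
   OP_i . e_2 >= 0 (making V = 0 admissible) is needed. *)

Section ContinuousFun.
Variables (R : realType) (T : topologicalType).

Lemma continuous_fun_add (f g : T -> R) :
  continuous f -> continuous g -> continuous (fun x => f x + g x).
Proof. by move=> hf hg x; apply: continuousD; [apply: hf | apply: hg]. Qed.

Lemma continuous_fun_sub (f g : T -> R) :
  continuous f -> continuous g -> continuous (fun x => f x - g x).
Proof. by move=> hf hg x; apply: continuousB; [apply: hf | apply: hg]. Qed.

Lemma continuous_fun_mul (f g : T -> R) :
  continuous f -> continuous g -> continuous (fun x => f x * g x).
Proof. by move=> hf hg x; apply: continuousM; [apply: hf | apply: hg]. Qed.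

Lemma continuous_fun_sum (I : Type) (s : seq I) (P : pred I) (f : I -> T -> R) :
  (forall i, continuous (f i)) -> continuous (fun x => \sum_(i <- s | P i) f i x).
Proof.
move=> hf; elim: s => [|i s IHs].
  by under eq_fun do rewrite big_nil; exact: cst_continuous.
under eq_fun do rewrite big_cons.
by case: (P i); first exact: continuous_fun_add.
Qed.

End ContinuousFun.

Lemma compact_min_of_sublevel (T : topologicalType) (R : realType) (f : T -> R)
    (A K : set T) (x0 : T) :
  compact K -> {within K, continuous f} -> K `<=` A -> K x0 ->
  (forall y, A y -> f y <= f x0 -> K y) ->
  exists2 x, A x & forall y, A y -> f x <= f y.
Proof.
move=> cK fK KA Kx0 sublevelK.
have [x /set_mem Kx xmin] := compact_EVT_min (ex_intro _ x0 Kx0) cK fK.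
exists x; first exact: KA.
move=> y Ay; have [fy_le|fy_gt] := leP (f y) (f x0).
  exact/xmin/mem_set/sublevelK.
by apply: le_trans (xmin _ (mem_set Kx0)) (ltW fy_gt).
Qed.

Lemma sum_midpoint (R : numFieldType) (T I : Type) (g : T -> I -> R) (m u w d : T)
    {s : seq I} {a : R} :
  (forall i, g m i = (g u i + g w i) / 2 - g d i / 4) ->
  a * \sum_(i <- s) g m i =
  (a * \sum_(i <- s) g u i + a * \sum_(i <- s) g w i) / 2 - a * (\sum_(i <- s) g d i) / 4.
Proof.
move=> gm; rewrite (eq_bigr _ (fun i _ => gm i)) sumrB -!mulr_suml big_split /=.
by field.
Qed.

Section PlanarVectors.
Variable R : realType.
Implicit Types a b : R * R.

Lemma nrm2_ge0 a : 0 <= nrm2 a.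
Proof. by rewrite /nrm2 /dot -!expr2 addr_ge0 ?sqr_ge0. Qed.

Lemma sqr_fst_le_nrm2 a : a.1 ^+ 2 <= nrm2 a.
Proof. by rewrite /nrm2 /dot -!expr2 lerDl sqr_ge0. Qed.

Lemma sqr_snd_le_nrm2 a : a.2 ^+ 2 <= nrm2 a.
Proof. by rewrite /nrm2 /dot -!expr2 lerDr sqr_ge0. Qed.

End PlanarVectors.

Section PlanarContinuity.
Variables (R : realType) (T : topologicalType).
Variables (v w : T -> R * R).
Hypotheses (v1_cont : continuous (fun x => (v x).1)) (v2_cont : continuous (fun x => (v x).2)).

Lemma continuous_dot (a : R * R) : continuous (fun x => dot a (v x)).
Proof. by apply: continuous_fun_add; apply: continuous_fun_mul => //; apply: cst_continuous. Qed.

Lemma continuous_nrm2_vsub :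
  continuous (fun x => (w x).1) -> continuous (fun x => (w x).2) ->
  continuous (fun x => nrm2 (vsub (v x) (w x))).
Proof.
by move=> w1_cont w2_cont; apply: continuous_fun_add; apply: continuous_fun_mul;
  apply: continuous_fun_sub.
Qed.

End PlanarContinuity.

Section PinnedChain.
Variables (R : realType) (n : nat).
Implicit Types (U V W : disp R n) (a b : R).

Definition disp0 : disp R n := [ffun => (0, 0)].

Definition lincomb a b U W : disp R n :=
  [ffun j => (a * (U j).1 + b * (W j).1, a * (U j).2 + b * (W j).2)].

Lemma vfull1 V : vfull V 1 = (0, 0).
Proof. by rewrite /vfull; case: insub. Qed.

Lemma vfull_ord V (j : 'I_n.-1) : vfull V j.+2 = V j.
Proof.
rewrite /vfull !subSS subn0; case: insubP => [u _ hu|]; last by rewrite ltn_ord.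
by congr (V _); apply: val_inj.
Qed.

Lemma vfull_disp0 i : vfull disp0 i = (0, 0).
Proof. by rewrite /vfull; case: insub => // j; case: ifP; rewrite ?ffunE. Qed.

Lemma vfull_lincomb a b U W i :
  vfull (lincomb a b U W) i =
  (a * (vfull U i).1 + b * (vfull W i).1, a * (vfull U i).2 + b * (vfull W i).2).
Proof.
by rewrite /vfull; case: insub => [j|]; first case: ifP;
  rewrite ?ffunE //= !mulr0 addr0.
Qed.

Definition stretch V := \sum_(1 <= i < n.+1) nrm2 (vsub (vfull V i.+1) (vfull V i)).

Lemma stretch_ge0 V : 0 <= stretch V.
Proof. by apply: sumr_ge0 => i _; apply: nrm2_ge0. Qed.

Lemma stretch_ge_term V i : (1 <= i < n.+1)%N ->
  nrm2 (vsub (vfull V i.+1) (vfull V i)) <= stretch V.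
Proof.
move=> hi; rewrite /stretch (bigD1_seq i) ?mem_index_iota ?iota_uniq //=.
by rewrite lerDl; apply: sumr_ge0 => l _; apply: nrm2_ge0.
Qed.

(* v_1 = 0 pins the chain: v_(j+2) is the sum of the j + 1 <= n increments before it,
   each of size at most sqrt (stretch V). *)
Lemma coord_le_stretch (p : R * R -> R) V (j : 'I_n.-1) :
  (forall u, p u ^+ 2 <= nrm2 u) -> (forall u w, p (vsub u w) = p u - p w) ->
  p (0, 0) = 0 ->
  `|p (V j)| <= n%:R * Num.sqrt (stretch V).
Proof.
move=> p_le p_sub p0; set s := Num.sqrt (stretch V).
have incr_le l : (1 <= l < n.+1)%N -> `|p (vfull V l.+1) - p (vfull V l)| <= s.
  move=> hl; rewrite -sqrtr_sqr -p_sub; apply: ler_wsqrtr.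
  apply: le_trans (p_le _) _; exact: stretch_ge_term.
have -> : p (V j) = \sum_(1 <= l < j.+2) (p (vfull V l.+1) - p (vfull V l)).
  by rewrite telescope_sumr // vfull1 p0 subr0 vfull_ord.
have jn := ltn_ord j.
apply: le_trans (ler_norm_sum _ _ _) _.
apply: (@le_trans _ _ (\sum_(1 <= l < j.+2) s)).
  by apply: ler_sum_nat => l /andP[hl1 hl2]; apply: incr_le; lia.
rewrite sumr_const_nat -[s *+ _]mulr_natl; apply: (ler_wpM2r (sqrtr_ge0 _)).
rewrite ler_nat; lia.
Qed.

Lemma fst_le_stretch V j : `|(V j).1| <= n%:R * Num.sqrt (stretch V).
Proof. exact: coord_le_stretch (@sqr_fst_le_nrm2 R) _ _. Qed.

Lemma snd_le_stretch V j : `|(V j).2| <= n%:R * Num.sqrt (stretch V).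
Proof. exact: coord_le_stretch (@sqr_snd_le_nrm2 R) _ _. Qed.

Lemma stretch_le0 V : stretch V <= 0 -> V = disp0.
Proof.
move=> hV; apply/ffunP => j; rewrite ffunE.
have := fst_le_stretch V j; have := snd_le_stretch V j.
rewrite ler0_sqrtr // mulr0 !normr_le0 => /eqP v2 /eqP v1.
by case: (V j) v1 v2 => ? ? /= -> ->.
Qed.

End PinnedChain.

Section RowEncoding.
Variables (R : realType) (n : nat).
Local Notation m := n.-1.

Definition disp_of_row (x : 'rV[R]_(m + m)) : disp R n :=
  [ffun j => (x ord0 (lshift m j), x ord0 (rshift m j))].

Definition row_of_disp (V : disp R n) : 'rV[R]_(m + m) :=
  \row_i match fintype.split i with inl j => (V j).1 | inr j => (V j).2 end.

Lemma split_lshift (j : 'I_m) : fintype.split (lshift m j) = inl j.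
Proof. exact: (unsplitK (inl _ j)). Qed.

Lemma split_rshift (j : 'I_m) : fintype.split (rshift m j) = inr j.
Proof. exact: (unsplitK (inr _ j)). Qed.

Lemma row_of_dispK : cancel row_of_disp disp_of_row.
Proof.
by move=> V; apply/ffunP => j; rewrite !ffunE !mxE split_lshift split_rshift; case: (V j).
Qed.

Lemma disp_of_rowK : cancel disp_of_row row_of_disp.
Proof.
move=> x; apply/rowP => i; rewrite -(splitK i) mxE.
by case: (fintype.split i) => j /=; rewrite ?split_lshift ?split_rshift ffunE.
Qed.

Lemma disp_of_row0 : disp_of_row 0 = disp0 R n.
Proof. by apply/ffunP => j; rewrite !ffunE !mxE. Qed.

Lemma continuous_disp_of_row_fst j : continuous (fun x => (disp_of_row x j).1).
Proof. by under eq_fun do rewrite ffunE; exact: coord_continuous. Qed.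

Lemma continuous_disp_of_row_snd j : continuous (fun x => (disp_of_row x j).2).
Proof. by under eq_fun do rewrite ffunE; exact: coord_continuous. Qed.

Lemma continuous_vfull_coord (p : R * R -> R) i :
  p (0, 0) = 0 -> (forall j, continuous (fun x => p (disp_of_row x j))) ->
  continuous (fun x => p (vfull (disp_of_row x) i)).
Proof.
move=> p0 p_cont; rewrite /vfull; case: insub => [j|]; first case: (2 <= i)%N.
- exact: p_cont.
- by rewrite p0; apply: cst_continuous.
- by rewrite p0; apply: cst_continuous.
Qed.

Lemma continuous_vfull_fst i : continuous (fun x => (vfull (disp_of_row x) i).1).
Proof. exact/continuous_vfull_coord/continuous_disp_of_row_fst. Qed.

Lemma continuous_vfull_snd i : continuous (fun x => (vfull (disp_of_row x) i).2).
Proof. exact/continuous_vfull_coord/continuous_disp_of_row_snd. Qed.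

End RowEncoding.

Section Energy.
Variables (R : realType) (n : nat) (c : R * R) (r th k kappa : R) (F : disp R n).
Hypotheses (k_gt0 : 0 < k) (kappa_ge0 : 0 <= kappa).
Implicit Types U V W : disp R n.

Definition objective V := Jtot c r th k kappa V - pairing F V.

Lemma JsE V : Js k V = k / 2 * stretch V.
Proof. by []. Qed.

Lemma Jb_ge0 V : 0 <= Jb c r th kappa V.
Proof.
apply: mulr_ge0; last by apply: sumr_ge0 => i _; exact: sqr_ge0.
by rewrite divr_ge0 // mulr_ge0 // sqr_ge0.
Qed.

Definition force_norm := \sum_(j : 'I_n.-1) (`|(F j).1| + `|(F j).2|).

Lemma force_norm_ge0 : 0 <= force_norm.
Proof. by apply: sumr_ge0 => j _; apply: addr_ge0. Qed.

Lemma pairing_le V : pairing F V <= force_norm * (n%:R * Num.sqrt (stretch V)).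
Proof.
rewrite /pairing /force_norm mulr_suml; apply: ler_sum => j _; rewrite /dot mulrDl.
by apply: lerD; apply: le_trans (ler_norm _) _; rewrite normrM ler_wpM2l //;
  [exact: fst_le_stretch | exact: snd_le_stretch].
Qed.

Lemma sqrt_stretch_le V : objective V <= 0 ->
  Num.sqrt (stretch V) <= 2 * force_norm * n%:R / k.
Proof.
move=> V_le0; set s := Num.sqrt (stretch V).
have s_ge0 : 0 <= s by exact: sqrtr_ge0.
have ks2_le : k * s ^+ 2 <= 2 * force_norm * n%:R * s.
  have : k / 2 * s ^+ 2 - force_norm * (n%:R * s) <= objective V.
    rewrite /objective /Jtot sqr_sqrtr ?stretch_ge0 // -JsE.
    by apply: lerB; [rewrite lerDl; apply: Jb_ge0 | apply: pairing_le].
  move: V_le0; rewrite -mulrA; lra.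
rewrite ler_pdivlMr //; have [->|s_neq0] := eqVneq s 0.
  by rewrite mul0r !mulr_ge0 ?force_norm_ge0.
have s_gt0 : 0 < s by rewrite lt_def s_neq0 s_ge0.
by rewrite -(ler_pM2r s_gt0); apply: le_trans ks2_le; rewrite expr2; lra.
Qed.

Definition sublevel_radius := n%:R * (2 * force_norm * n%:R / k).

Lemma sublevel_radius_ge0 : 0 <= sublevel_radius.
Proof. by rewrite /sublevel_radius !mulr_ge0 ?invr_ge0 ?force_norm_ge0 // ltW. Qed.

Lemma sublevel_coord_le V : objective V <= 0 ->
  forall j, `|(V j).1| <= sublevel_radius /\ `|(V j).2| <= sublevel_radius.
Proof.
move=> /sqrt_stretch_le s_le j.
by split; [apply: le_trans (fst_le_stretch V j) _ | apply: le_trans (snd_le_stretch V j) _];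
  apply: ler_wpM2l.
Qed.

Lemma objective_disp0 : objective (disp0 R n) = 0.
Proof.
rewrite /objective /Jtot /Js /Jb /pairing.
rewrite !big1 => [|i _|i _|i _]; rewrite ?vfull_disp0 ?ffunE /nrm2 /dot /=; ring.
Qed.

Definition midpoint U W := lincomb 2^-1 2^-1 U W.
Definition disp_sub U W := lincomb 1 (-1) U W.

Lemma Js_midpoint U W :
  Js k (midpoint U W) = (Js k U + Js k W) / 2 - Js k (disp_sub U W) / 4.
Proof.
rewrite /Js; apply: (@sum_midpoint R _ _ (fun V i => nrm2 (vsub (vfull V i.+1) (vfull V i)))
  (midpoint U W) U W (disp_sub U W)) => i.
by rewrite !vfull_lincomb /nrm2 /dot /vsub /=; field.
Qed.

Lemma Jb_midpoint U W : Jb c r th kappa (midpoint U W) =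
  (Jb c r th kappa U + Jb c r th kappa W) / 2 - Jb c r th kappa (disp_sub U W) / 4.
Proof.
rewrite /Jb; apply: (@sum_midpoint R _ _ (fun V i => (dot (edge n c r th i) (vfull V i.+1)
  + dot (vsub (edge n c r th i.+1) (edge n c r th i)) (vfull V i)
  - dot (edge n c r th i.+1) (vfull V i.-1)) ^+ 2) (midpoint U W) U W (disp_sub U W)) => i.
by rewrite !vfull_lincomb /dot /vsub /=; field.
Qed.

Lemma pairing_midpoint U W :
  pairing F (midpoint U W) = (pairing F U + pairing F W) / 2.
Proof.
rewrite /pairing -big_split mulr_suml; apply: eq_bigr => j _.
by rewrite ffunE /dot /=; field.
Qed.

Lemma objective_midpoint U W : objective (midpoint U W) =
  (objective U + objective W) / 2 - Jtot c r th k kappa (disp_sub U W) / 4.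
Proof.
by rewrite /objective /Jtot Js_midpoint Jb_midpoint pairing_midpoint; field.
Qed.

Lemma admissible_midpoint U W :
  admissible c r th U -> admissible c r th W -> admissible c r th (midpoint U W).
Proof.
move=> hU hW i hi; have := hU i hi; have := hW i hi.
rewrite vfull_lincomb /vadd /=; lra.
Qed.

Lemma objective_minimizer_uniq U W :
  admissible c r th U -> admissible c r th W ->
  (forall V, admissible c r th V -> objective U <= objective V) ->
  (forall V, admissible c r th V -> objective W <= objective V) -> U = W.
Proof.
move=> hU hW U_min W_min.
have := U_min _ (admissible_midpoint hU hW); have := U_min _ hW; have := W_min _ hU.
rewrite objective_midpoint /Jtot JsE => W_le_U U_le_W.
have := Jb_ge0 (disp_sub U W); have := stretch_ge0 (disp_sub U W).
set J := Jb _ _ _ _ _; set s := stretch _ => s_ge0 J_ge0 U_le_mid.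
have /stretch_le0 /ffunP UW0 : s <= 0.
  have Jtot_le0 : k / 2 * s + J <= 0 by lra.
  by rewrite -(pmulr_rle0 _ k_gt0); nra.
apply/ffunP => j; have := UW0 j; rewrite !ffunE.
by case: (U j) (W j) => [u1 u2] [w1 w2] /= [] e1 e2; congr pair; lra.
Qed.

End Energy.

Section Existence.
Variables (R : realType) (n : nat) (c : R * R) (r th k kappa : R) (F : disp R n).
Hypotheses (k_gt0 : 0 < k) (kappa_ge0 : 0 <= kappa).
Hypothesis vtx_ge0 : forall i, (2 <= i <= n)%N -> 0 <= (vtx n c r th i).2.
Local Notation m := n.-1.
Local Notation M := (sublevel_radius k F).
Local Notation objective := (objective c r th k kappa F).
Local Notation admissible := (admissible c r th).

Lemma continuous_objective : continuous (fun x => objective (disp_of_row x)).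
Proof.
have [v1 v2] := (@continuous_vfull_fst R n, @continuous_vfull_snd R n).
apply: continuous_fun_sub; first apply: continuous_fun_add.
- apply: continuous_fun_mul; first exact: cst_continuous.
  by apply: continuous_fun_sum => i; apply: continuous_nrm2_vsub.
- apply: continuous_fun_mul; first exact: cst_continuous.
  apply: continuous_fun_sum => i.
  apply: continuous_fun_mul;
    by (apply: continuous_fun_sub; first apply: continuous_fun_add); apply: continuous_dot.
- apply: continuous_fun_sum => j; apply: continuous_dot.
  + exact: continuous_disp_of_row_fst.
  + exact: continuous_disp_of_row_snd.
Qed.

(* Bounding the second coordinate of v_(j+2) below by -(OP_(j+2) . e_2) makes the whole
   box admissible. *)
Definition box_side (i : 'I_(m + m)) : set R :=
  match fintype.split i with
  | inl _ => `[- M, M]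
  | inr j => `[- (vtx n c r th j.+2).2, M]
  end.

Definition box := [set x : 'rV[R]_(m + m) | forall i, box_side i (x ord0 i)].

Lemma box_compact : compact box.
Proof.
by apply: rV_compact => i; rewrite /box_side; case: fintype.split => j;
  exact: segment_compact.
Qed.

Lemma box_admissible x : box x -> admissible (disp_of_row x).
Proof.
move=> x_box i /andP[i_ge2 i_len].
have j_lt : (i - 2 < m)%N by lia.
have -> : i = (Ordinal j_lt).+2 by rewrite /=; lia.
rewrite vfull_ord ffunE /vadd /=.
have := x_box (rshift m (Ordinal j_lt)); rewrite /box_side split_rshift /= in_itv /=.
by case/andP; lra.
Qed.

Lemma box0 : box 0.
Proof.
have M_ge0 := sublevel_radius_ge0 F k_gt0.
move=> i; rewrite /box_side mxE; case: fintype.split => j /=; rewrite in_itv /= M_ge0 andbT.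
  by rewrite oppr_le0.
have j_range : (2 <= j.+2 <= n)%N by have := ltn_ord j; lia.
by rewrite oppr_le0; exact: vtx_ge0 j_range.
Qed.

Lemma sublevel_box V : admissible V -> objective V <= 0 -> box (row_of_disp V).
Proof.
move=> V_adm /(sublevel_coord_le k_gt0 kappa_ge0) V_le i; rewrite /box_side mxE.
case: fintype.split => j /=; rewrite in_itv /=; have [/ler_normlP[]+ + /ler_normlP[]] := V_le j.
  by rewrite lerNl => -> ->.
move=> _ _ _ ->; rewrite andbT.
have j_range : (2 <= j.+2 <= n)%N by have := ltn_ord j; lia.
by have := V_adm _ j_range; rewrite vfull_ord /vadd /=; lra.
Qed.

Lemma objective_min_exists :
  exists2 U, admissible U & forall V, admissible V -> objective U <= objective V.
Proof.
have [|x x_adm x_min] := compact_min_of_sublevel box_compact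
  (continuous_subspaceT continuous_objective) box_admissible box0.
  move=> y y_adm; rewrite disp_of_row0 objective_disp0 => y_le0.
  by rewrite -[y]disp_of_rowK; apply: sublevel_box.
exists (disp_of_row x) => // V V_adm.
by rewrite -[V]row_of_dispK; apply: x_min; rewrite row_of_dispK.
Qed.

End Existence.

Theorem mainTheorem1 (R : realType) (n : nat) (c : R * R) (r th : R)
  (k kappa : R) (F : disp R n) :
  (3 <= n)%N -> 0 < r ->
  (vtx n c r th 1).2 = 0 ->
  (forall i : nat, (2 <= i <= n)%N -> 0 < (vtx n c r th i).2) ->
  0 < k -> 0 < kappa ->
  exists! U : disp R n,
    admissible c r th U /\
    forall V : disp R n, admissible c r th V ->
      Jtot c r th k kappa U - pairing F U <= Jtot c r th k kappa V - pairing F V.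
Proof.
move=> _ _ _ vtx_gt0 k_gt0 kappa_gt0.
have kappa_ge0 := ltW kappa_gt0.
have vtx_ge0 i (hi : (2 <= i <= n)%N) := ltW (vtx_gt0 i hi).
have [U U_adm U_min] := objective_min_exists F k_gt0 kappa_ge0 vtx_ge0.
exists U; split => [|W [W_adm W_min]]; first by [].
by apply: (objective_minimizer_uniq k_gt0 kappa_ge0 U_adm W_adm U_min) => V; apply: W_min.
Qed.
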